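(* Let $\Delta$ be a triangle, $v$ a vertex, and $(\xi_m)_{m\ge0}$ the associated sequence of partitions of the angular interval $I$ at $v$, normalized to have length $1$, with $P_m$ the number of cutting points of $\xi_m$. Let $n\ge0$ and $c\ge 4$ be integers such that $e^c<P_n$ and $P_{n+c}\ge(4+2c)P_n$. Then there exist three cutting points $x_p,x_q,x_r$ in good position, with indices $p,q,r\in[n+1,n+c]$, whose pairwise distances are at most $e^c/P_n$.
   Context: Let $\Delta$ be a triangle and $v$ a vertex of $\Delta$. Identify the set of directions (rays) emanating from $v$ into $\Delta$ with an interval $I$ via angular coordinate, rescaled so that $I$ has length $1$. A generalized diagonal is a billiard orbit segment from a vertex to a vertex; its length is its number of reflections. A direction $x\in I$ whose billiard trajectory from $v$ is a generalized diagonal is assigned an index, namely the length of that generalized diagonal; we write $x_p$ for such a point of index $p$. The partition $\xi_m$ of $I$ is the partition into subintervals whose cutting points are exactly the directions of index at most $m$; $P_m$ is the number of its cutting points (the number of generalized diagonals from $v$ of length at most $m$). Three cutting points $x_p,x_q,x_r$ with indices $p<q<r$ are in good position if (1) $x_r$ lies strictly between $x_p$ and $x_q$, and (2) the open interval bounded by $x_p$ and $x_q$ contains no cutting point of index $\le r$ other than $x_r$. *)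

From HB Require Import structures.
From mathcomp Require Import all_boot all_order all_algebra.
From mathcomp Require Import finmap.
From mathcomp Require Import all_classical all_reals all_analysis.
Set Implicit Arguments. Unset Strict Implicit. Unset Printing Implicit Defensive.
Import Order.TTheory GRing.Theory Num.Theory.
Local Open Scope classical_set_scope.
Local Open Scope ring_scope.

Section Billiard.
Variable R : realType.
Definition pt := (R * R)%type.

Definition padd (p q : pt) : pt := (p.1 + q.1, p.2 + q.2).
Definition psub (p q : pt) : pt := (p.1 - q.1, p.2 - q.2).
Definition pscale (k : R) (p : pt) : pt := (k * p.1, k * p.2).
Definition pdot (p q : pt) : R := p.1 * q.1 + p.2 * q.2.
Definition pcross (p q : pt) : R := p.1 * q.2 - p.2 * q.1.
Definition pnorm (p : pt) : R := Num.sqrt (pdot p p).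

Definition tri_nondegenerate (a b c : pt) : Prop := pcross (psub b a) (psub c a) != 0.

Definition is_vertex (a b c p : pt) : Prop := p = a \/ p = b \/ p = c.

Definition on_open_seg (s t p : pt) : Prop :=
  exists l : R, 0 < l < 1 /\ p = padd (pscale (1 - l) s) (pscale l t).

Definition in_interior (a b c q : pt) : Prop :=
  exists al be ga : R, 0 < al /\ 0 < be /\ 0 < ga /\ al + be + ga = 1 /\
    q = padd (padd (pscale al a) (pscale be b)) (pscale ga c).

Definition open_seg_inside (a b c p q : pt) : Prop :=
  forall t : R, 0 < t < 1 -> in_interior a b c (padd (pscale (1 - t) p) (pscale t q)).

Definition reflect_dir (e d : pt) : pt :=
  psub (pscale (2 * pdot d e / pdot e e) e) d.

Definition on_side_dir (a b c p e : pt) : Prop :=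
  (on_open_seg a b p /\ e = psub b a) \/
  (on_open_seg b c p /\ e = psub c b) \/
  (on_open_seg c a p /\ e = psub a c).

(* angular coordinate at vertex a: x in [0,1] corresponds to the direction
   obtained by rotating the direction of side ab towards side ac by the angle
   x * (angle at a). *)
Definition uhat (a b : pt) : pt := pscale (pnorm (psub b a))^-1 (psub b a).
Definition nperp (a b c : pt) : pt :=
  let w := psub c a in
  let u := uhat a b in
  let v := psub w (pscale (pdot w u) u) in pscale (pnorm v)^-1 v.
Definition angle_at (a b c : pt) : R :=
  acos (pdot (uhat a b) (uhat a c)).
Definition dir_of (a b c : pt) (x : R) : pt :=
  padd (pscale (cos (x * angle_at a b c)) (uhat a b))
       (pscale (sin (x * angle_at a b c)) (nperp a b c)).

(* gen_diag a b c x k : the billiard trajectory from vertex a in the direction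
   with angular coordinate x is a generalized diagonal with exactly k
   reflections: points p_0 = a, p_1, ..., p_{k+1}; p_1..p_k interior points of
   sides, p_{k+1} a vertex, every open segment (p_i,p_{i+1}) inside the
   triangle, first segment in direction dir_of x, and the reflection law at
   each p_i (1 <= i <= k). *)
Definition gen_diag (a b c : pt) (x : R) (k : nat) : Prop :=
  0 <= x <= 1 /\
  exists p : nat -> pt,
    p 0%N = a /\
    is_vertex a b c (p k.+1) /\
    (forall i : nat, (i <= k)%N -> open_seg_inside a b c (p i) (p i.+1)) /\
    (exists l : R, 0 < l /\ psub (p 1%N) a = pscale l (dir_of a b c x)) /\
    (forall i : nat, (1 <= i <= k)%N ->
       exists e : pt, on_side_dir a b c (p i) e /\
       exists mu : R, 0 < mu /\
         psub (p i.+1) (p i) = pscale mu (reflect_dir e (psub (p i) (p i.-1)))).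

(* cutting points of xi_m: directions of index at most m *)
Definition cut_set (a b c : pt) (m : nat) : set R :=
  [set x | exists k : nat, (k <= m)%N /\ gen_diag a b c x k].

Definition Pcount (a b c : pt) (m : nat) : nat := #|` fset_set (cut_set a b c m)|%fset.

Definition good_position (a b c : pt) (x y z : R) (p q r : nat) : Prop :=
  (p < q < r)%N /\ gen_diag a b c x p /\ gen_diag a b c y q /\ gen_diag a b c z r /\
  (Num.min x y < z < Num.max x y) /\
  (forall w : R, Num.min x y < w < Num.max x y -> cut_set a b c r w -> w = z).

End Billiard.

From HB Require Import structures.
From mathcomp Require Import all_boot all_order all_algebra.
From mathcomp Require Import finmap.
From mathcomp Require Import all_classical all_reals all_analysis.
From mathcomp.algebra_tactics Require Import ring lra.
From mathcomp Require Import zify.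
Import Order.TTheory GRing.Theory Num.Theory.
Local Open Scope ring_scope.
Set Implicit Arguments. Unset Strict Implicit. Unset Printing Implicit Defensive.

(* Unfolding the triangle along a generalized diagonal turns it into a straight segment.
   Two generalized diagonals from [a] of the same length in directions [z1 < z2] cannot
   cross the same sequence of sides (they would unfold to the same segment), so they part
   at some side; the vertex where they part, seen from [a] through the unfolded copies of
   the triangle, is reached by a strictly shorter generalized diagonal in a direction
   between [z1] and [z2].  Hence two cutting points of equal index are separated by one
   of smaller index.

   Counting the new cutting points (index in (n, n + c]) by index: a new point whose
   nearest lower-index neighbour on the left (or on the right) is old occurs at most
   [P_n + 1] times per index, since two such points are separated by an old point.  If
   both neighbours are new and within [e^c / P_n] of each other they form, with the
   point, a triple in good position; otherwise the gaps between the neighbours are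
   disjoint intervals of length [> e^c / P_n], so there are at most [P_n / e^c] of them
   per index.  Without a close triple, [P_(n+c) - P_n <= c (2 (P_n + 1) + P_n / e^c)],
   which contradicts [P_(n+c) >= (4 + 2c) P_n] once [e^c < P_n]. *)

Section Counting.
Variable T : eqType.

Lemma count_or3_le (p1 p2 p3 : pred T) (s : seq T) :
  (count (fun x => [|| p1 x, p2 x | p3 x]) s <= count p1 s + count p2 s + count p3 s)%N.
Proof.
elim: s => //= x s IH.
by move: IH; case: (p1 x); case: (p2 x); case: (p3 x) => /=; lia.
Qed.

Lemma count_le_sum_cover (p : pred T) (q : nat -> pred T) (rs : seq nat) (s : seq T) :
  (forall x, x \in s -> p x -> has (q^~ x) rs) ->
  (count p s <= \sum_(r <- rs) count (q r) s)%N.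
Proof.
elim: s => [|x s IH] cover /=; first by rewrite big1.
rewrite (eq_bigr (fun r => q r x + count (q r) s)%N) // big_split /=.
apply: leq_add; last by apply: IH => y ys; apply: cover; rewrite inE ys orbT.
case px : (p x) => //; rewrite lt0n sum_nat_seq_eq0 -has_predC.
apply: sub_has (cover x (mem_head x s) px) => r /=; by case: (q r x).
Qed.

End Counting.

Section SeqExtrema.
Variables (d : Order.disp_t) (T : orderType d).

Lemma seq_max_exists (s : seq T) : s != [::] ->
  exists2 m, m \in s & forall x, x \in s -> (x <= m)%O.
Proof.
elim: s => // y s IH _; case: s IH => [|z s] IH.
  by exists y; rewrite ?mem_seq1 // => x; rewrite mem_seq1 => /eqP ->.
have [m ms le_m] := IH isT; case: (leP y m) => [le_ym|lt_my].
- by exists m => [|x]; rewrite inE ?ms ?orbT // => /orP [/eqP ->|/le_m].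
- exists y => [|x]; rewrite inE ?eqxx // => /orP [/eqP ->//|/le_m le_xm].
  exact: le_trans le_xm (ltW lt_my).
Qed.

End SeqExtrema.

Lemma seq_min_exists (d : Order.disp_t) (T : orderType d) (s : seq T) : s != [::] ->
  exists2 m, m \in s & forall x, x \in s -> (m <= x)%O.
Proof. by move=> /(@seq_max_exists _ T^d s) [m ms le_m]; exists m. Qed.

Section Separation.
Variable R : realDomainType.

Lemma count_below_lt (O : seq R) (w u : R) : w \in O -> w < u ->
  (count (fun x => (x < w)%R) O < count (fun x => (x < u)%R) O)%N.
Proof.
move=> wO lt_wu.
have -> : count (fun x => (x < u)%R) O =
    (count (fun x => (x < w)%R) O + count (fun x => (w <= x < u)%R) O)%N.
  rewrite -count_predUI (@eq_count _ (predI _ _) pred0) => [|x /=]; last first.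
    by case: (ltP x w).
  rewrite count_pred0 addn0; apply: eq_count => x /=.
  by case: (ltP x w) => //= lt_xw; rewrite (lt_trans lt_xw lt_wu).
rewrite -[X in (X < _)%N]addn0 ltn_add2l -has_count.
by apply/hasP; exists w; rewrite ?lexx.
Qed.

Lemma size_le_count_below (O Z : seq R) (u : R) : uniq Z ->
  (forall z1 z2, z1 \in Z -> z2 \in Z -> z1 < z2 -> exists2 w, w \in O & z1 < w < z2) ->
  (forall z, z \in Z -> z <= u) ->
  (size Z <= (count (fun x => (x < u)%R) O).+1)%N.
Proof.
elim: {Z}(size Z).+1 {-2}Z (ltnSn (size Z)) u => // N IH Z lt_sizeZ u uZ sepZ le_Zu.
have [->|Z_nil] := eqVneq Z [::]; first by [].
have [M MZ le_ZM] := seq_max_exists Z_nil.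
have Z_gt0 : (0 < size Z)%N by rewrite lt0n size_eq0.
set Z' := rem M Z.
have Z'Z x : x \in Z' -> x \in Z by apply: mem_rem.
have sizeZ' : size Z' = (size Z).-1 by rewrite size_rem.
have sizeZ'_lt : (size Z' < N)%N by rewrite sizeZ' -ltnS prednK ?Z_gt0.
have [Z'_nil|Z'_nil] := eqVneq Z' [::].
  by rewrite -(prednK Z_gt0) -sizeZ' Z'_nil.
have [M' M'Z' le_Z'M'] := seq_max_exists Z'_nil.
have lt_M'M : M' < M.
  rewrite lt_neqAle le_ZM ?Z'Z // andbT.
  by move: M'Z'; rewrite mem_rem_uniq // inE => /andP [].
have [w wO /andP [lt_M'w lt_wM]] := sepZ M' M (Z'Z _ M'Z') MZ lt_M'M.
have le_Z'w z : z \in Z' -> z <= w by move=> zZ'; exact: le_trans (le_Z'M' z zZ') (ltW lt_M'w).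
have IHZ' := IH Z' sizeZ'_lt w (rem_uniq M uZ)
  (fun z1 z2 h1 h2 => sepZ z1 z2 (Z'Z _ h1) (Z'Z _ h2)) le_Z'w.
have lt_count := count_below_lt wO (lt_le_trans lt_wM (le_Zu M MZ)).
rewrite -(prednK Z_gt0) -sizeZ' ltnS.
exact: leq_trans IHZ' lt_count.
Qed.

Lemma size_le_separators (O Z : seq R) : uniq Z ->
  (forall z1 z2, z1 \in Z -> z2 \in Z -> z1 < z2 -> exists2 w, w \in O & z1 < w < z2) ->
  (size Z <= (size O).+1)%N.
Proof.
move=> uZ sepZ; have [->|Z_nil] := eqVneq Z [::]; first by [].
have [M _ le_ZM] := seq_max_exists Z_nil.
by apply: leq_trans (size_le_count_below uZ sepZ le_ZM) _; rewrite ltnS count_size.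
Qed.

Lemma size_mul_le_disjoint_intervals (W : R -> R -> R -> Prop) (del u : R) (Z : seq R) :
  (forall z L R', W z L R' -> 0 <= L /\ del < R' - L) -> uniq Z ->
  (forall z, z \in Z -> exists L R', W z L R') ->
  (forall z1 z2 L1 R1 L2 R2, z1 \in Z -> z2 \in Z -> z1 < z2 ->
     W z1 L1 R1 -> W z2 L2 R2 -> R1 <= L2) ->
  0 <= u -> (forall z L R', z \in Z -> W z L R' -> R' <= u) ->
  (size Z)%:R * del <= u.
Proof.
move=> W_wide; elim: {Z}(size Z).+1 {-2}Z (ltnSn (size Z)) u => // N IH Z ltZN u.
move=> uZ W_ex W_ord u_ge0 W_le.
have [->|Z_nil] := eqVneq Z [::]; first by rewrite mul0r.
have [M MZ le_ZM] := seq_max_exists Z_nil.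
have [LM [RM WM]] := W_ex M MZ.
have [LM_ge0 wideM] := W_wide _ _ _ WM.
set Z' := rem M Z.
have Z'Z x : x \in Z' -> x \in Z by apply: mem_rem.
have sizeZ : size Z = (size Z').+1 by rewrite size_rem // prednK // lt0n size_eq0.
have lt_Z'M x : x \in Z' -> x < M.
  move=> xZ'; rewrite lt_neqAle le_ZM ?Z'Z // andbT.
  by move: xZ'; rewrite mem_rem_uniq // inE => /andP [].
have IHZ' := IH Z' ltac:(by rewrite -ltnS -sizeZ) LM (rem_uniq M uZ)
  (fun z zZ' => W_ex z (Z'Z _ zZ'))
  (fun z1 z2 L1 R1 L2 R2 h1 h2 => W_ord z1 z2 L1 R1 L2 R2 (Z'Z _ h1) (Z'Z _ h2)) LM_ge0
  (fun z L R' zZ' Wz => W_ord z M L R' LM RM (Z'Z _ zZ') MZ (lt_Z'M _ zZ') Wz WM).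
have := W_le M LM RM MZ WM.
rewrite sizeZ -addn1 natrD mulrDl mul1r; lra.
Qed.

End Separation.

Section NearestLowerNeighbours.
Variable R : realFieldType.
Variables (X : seq R) (idx : R -> nat) (n c : nat) (del : R).
Hypotheses (uX : uniq X) (X01 : forall x, x \in X -> 0 <= x <= 1)
  (idx_le : forall x, x \in X -> (idx x <= n + c)%N) (del_gt0 : 0 < del)
  (idx_sep : forall x y, x \in X -> y \in X -> x < y -> idx x = idx y ->
     exists w, w \in X /\ x < w < y /\ (idx w < idx x)%N).

Definition left_nbr (z L : R) : Prop := L \in X /\ (idx L < idx z)%N /\ L < z /\
  forall w, w \in X -> (idx w < idx z)%N -> ~ (L < w < z).
Definition right_nbr (z R' : R) : Prop := R' \in X /\ (idx R' < idx z)%N /\ z < R' /\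
  forall w, w \in X -> (idx w < idx z)%N -> ~ (z < w < R').
Definition new_left_nbr (z : R) : Prop := exists L, left_nbr z L /\ (n < idx L)%N.
Definition new_right_nbr (z : R) : Prop := exists R', right_nbr z R' /\ (n < idx R')%N.
Definition wide_new_nbrs_at (z L R' : R) : Prop := left_nbr z L /\ right_nbr z R' /\
  (n < idx L)%N /\ (n < idx R')%N /\ del < R' - L.
Definition wide_new_nbrs (z : R) : Prop := exists L R', wide_new_nbrs_at z L R'.

Definition close_good_triple : Prop := exists x y z, x \in X /\ y \in X /\ z \in X /\
  (n < idx x)%N /\ (idx x < idx y)%N /\ (idx y < idx z)%N /\ (idx z <= n + c)%N /\
  Num.min x y < z < Num.max x y /\
  (forall w, w \in X -> (idx w <= idx z)%N -> Num.min x y < w < Num.max x y -> w = z) /\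
  `|x - y| <= del /\ `|x - z| <= del /\ `|y - z| <= del.

Let old_count := count (fun x => (idx x <= n)%N) X.

Lemma left_nbr_exists z w : w \in X -> (idx w < idx z)%N -> w < z ->
  exists L, left_nbr z L /\ w <= L.
Proof.
move=> wX lt_idx lt_wz.
set s := [seq x <- X | (idx x < idx z)%N && (x < z)].
have ws : w \in s by rewrite mem_filter lt_idx lt_wz wX.
have s_nil : s != [::] by apply/eqP => s0; rewrite s0 in ws.
have [M] := seq_max_exists s_nil; rewrite mem_filter => /andP [/andP [ltM ltMz] MX] le_sM.
exists M; split; last exact: le_sM.
do 3 split => //; move=> x xX lt_x /andP [lt_Mx lt_xz].
by have := le_sM x; rewrite mem_filter lt_x lt_xz xX leNgt lt_Mx => /(_ isT).
Qed.

Lemma right_nbr_exists z w : w \in X -> (idx w < idx z)%N -> z < w ->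
  exists R', right_nbr z R' /\ R' <= w.
Proof.
move=> wX lt_idx lt_zw.
set s := [seq x <- X | (idx x < idx z)%N && (z < x)].
have ws : w \in s by rewrite mem_filter lt_idx lt_zw wX.
have s_nil : s != [::] by apply/eqP => s0; rewrite s0 in ws.
have [M] := seq_min_exists s_nil; rewrite mem_filter => /andP [/andP [ltM ltzM] MX] le_Ms.
exists M; split; last exact: le_Ms.
do 3 split => //; move=> x xX lt_x /andP [lt_zx lt_xM].
by have := le_Ms x; rewrite mem_filter lt_x lt_zx xX leNgt lt_xM => /(_ isT).
Qed.

Lemma no_lower_between_nbrs z L R' w : left_nbr z L -> right_nbr z R' ->
  w \in X -> (idx w < idx z)%N -> ~ (L < w < R').
Proof.
move=> [_ [_ [_ noL]]] [_ [_ [_ noR]]] wX lt_idx /andP [lt_Lw lt_wR].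
case: (ltgtP w z) => [lt_wz|lt_zw|eq_wz].
- by apply: (noL w wX lt_idx); rewrite lt_Lw lt_wz.
- by apply: (noR w wX lt_idx); rewrite lt_zw lt_wR.
- by move: lt_idx; rewrite eq_wz ltnn.
Qed.

Lemma nbrs_only_point_of_small_index z L R' w : z \in X ->
  left_nbr z L -> right_nbr z R' -> w \in X -> (idx w <= idx z)%N -> L < w < R' -> w = z.
Proof.
move=> zX lnb rnb wX le_idx /andP [lt_Lw lt_wR].
have [_ [_ [lt_Lz _]]] := lnb; have [_ [_ [lt_zR _]]] := rnb.
have no_lower := no_lower_between_nbrs lnb rnb.
case: (ltngtP (idx w) (idx z)) => [lt_idx||eq_idx].
- by case: (no_lower w wX lt_idx); rewrite lt_Lw lt_wR.
- by rewrite ltnNge le_idx.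
case: (ltgtP w z) => // [lt_wz|lt_zw]; exfalso.
- have [v [vX [/andP [lt_wv lt_vz] lt_v]]] := idx_sep wX zX lt_wz eq_idx.
  apply: (no_lower v vX); first by rewrite -eq_idx.
  by rewrite (lt_trans lt_Lw lt_wv) (lt_trans lt_vz lt_zR).
- have [v [vX [/andP [lt_zv lt_vw] lt_v]]] := idx_sep zX wX lt_zw (esym eq_idx).
  by apply: (no_lower v vX lt_v); rewrite (lt_trans lt_Lz lt_zv) (lt_trans lt_vw lt_wR).
Qed.

Lemma close_good_triple_of_narrow_nbrs z L R' : z \in X ->
  left_nbr z L -> right_nbr z R' -> (n < idx L)%N -> (n < idx R')%N ->
  R' - L <= del -> close_good_triple.
Proof.
move=> zX lnb rnb new_L new_R narrow.
have [LX [lt_L [lt_Lz _]]] := lnb; have [RX [lt_R [lt_zR _]]] := rnb.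
have lt_LR : L < R' := lt_trans lt_Lz lt_zR.
have only_z := nbrs_only_point_of_small_index zX lnb rnb.
have neq_idx : idx L != idx R'.
  apply/eqP => eq_idx; have [w [wX [mid lt_w]]] := idx_sep LX RX lt_LR eq_idx.
  exact: (no_lower_between_nbrs lnb rnb wX (ltn_trans lt_w lt_L) mid).
have dLR : `|L - R'| <= del by rewrite distrC ger0_norm // subr_ge0 ltW.
have dLz : `|L - z| <= del by rewrite distrC ger0_norm ?subr_ge0 ?(ltW lt_Lz) //; lra.
have dRz : `|R' - z| <= del by rewrite ger0_norm ?subr_ge0 ?(ltW lt_zR) //; lra.
case: (ltngtP (idx L) (idx R')) => [lt_LR_idx|lt_RL_idx|eq_idx]; last by rewrite eq_idx eqxx in neq_idx.
- exists L, R', z; rewrite (min_l (ltW lt_LR)) (max_r (ltW lt_LR)) lt_Lz lt_zR.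
  do 6 (split => //); split; first exact: idx_le.
  by do 2 split => //.
- exists R', L, z; rewrite (min_r (ltW lt_LR)) (max_l (ltW lt_LR)) lt_Lz lt_zR distrC.
  do 6 (split => //); split; first exact: idx_le.
  by do 2 split => //.
Qed.

Lemma count_no_new_left_nbr r :
  (count (fun z => (idx z == r) && ~~ `[< new_left_nbr z >]) X <= old_count.+1)%N.
Proof.
rewrite -size_filter /old_count -size_filter; apply: size_le_separators; first exact: filter_uniq.
move=> z1 z2; rewrite !mem_filter => /andP [/andP [/eqP idx1 _] z1X].
move=> /andP [/andP [/eqP idx2 not_new2] z2X] lt_z12.
have [w [wX [/andP [lt_z1w lt_wz2] lt_w]]] := idx_sep z1X z2X lt_z12 (etrans idx1 (esym idx2)).
rewrite idx1 -idx2 in lt_w.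
have [L [lnb le_wL]] := left_nbr_exists wX lt_w lt_wz2.
have [LX [lt_L [lt_Lz2 _]]] := lnb.
exists L; last by rewrite (lt_le_trans lt_z1w le_wL) lt_Lz2.
rewrite mem_filter LX andbT leqNgt; apply/negP => new_L.
by move/negP: not_new2; apply; apply/asboolP; exists L.
Qed.

Lemma count_no_new_right_nbr r :
  (count (fun z => (idx z == r) && ~~ `[< new_right_nbr z >]) X <= old_count.+1)%N.
Proof.
rewrite -size_filter /old_count -size_filter; apply: size_le_separators; first exact: filter_uniq.
move=> z1 z2; rewrite !mem_filter => /andP [/andP [/eqP idx1 not_new1] z1X].
move=> /andP [/andP [/eqP idx2 _] z2X] lt_z12.
have [w [wX [/andP [lt_z1w lt_wz2] lt_w]]] := idx_sep z1X z2X lt_z12 (etrans idx1 (esym idx2)).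
have [R' [rnb le_Rw]] := right_nbr_exists wX lt_w lt_z1w.
have [RX [lt_R [lt_z1R _]]] := rnb.
exists R'; last by rewrite lt_z1R (le_lt_trans le_Rw lt_wz2).
rewrite mem_filter RX andbT leqNgt; apply/negP => new_R.
by move/negP: not_new1; apply; apply/asboolP; exists R'.
Qed.

Lemma count_wide_new_nbrs r :
  (count (fun z => (idx z == r) && `[< wide_new_nbrs z >]) X)%:R * del <= 1.
Proof.
rewrite -size_filter.
apply: (@size_mul_le_disjoint_intervals _ wide_new_nbrs_at) => //.
- move=> z L R' [[LX _] [_ [_ [_ wide]]]]; split => //.
  by case/andP: (X01 LX).
- exact: filter_uniq.
- by move=> z; rewrite mem_filter => /andP [/andP [_ /asboolP]].
- move=> z1 z2 L1 R1 L2 R2; rewrite !mem_filter => /andP [/andP [/eqP idx1 _] z1X].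
  move=> /andP [/andP [/eqP idx2 _] z2X] lt_z12 [_ [[_ [_ [_ noR1]]] _]] [[_ [_ [_ noL2]]] _].
  have [w [wX [/andP [lt_z1w lt_wz2] lt_w]]] := idx_sep z1X z2X lt_z12 (etrans idx1 (esym idx2)).
  have le_R1w : R1 <= w by rewrite leNgt; apply/negP => lt_wR1; apply: (noR1 w wX lt_w); rewrite lt_z1w.
  have le_wL2 : w <= L2.
    rewrite leNgt; apply/negP => lt_L2w; apply: (noL2 w wX); last by rewrite lt_L2w.
    by rewrite idx2 -idx1.
  exact: le_trans le_R1w le_wL2.
- by move=> z L R' _ [_ [[RX _] _]]; case/andP: (X01 RX).
Qed.

Lemma close_good_triple_or_few_new : close_good_triple \/
  (count (fun x => (n < idx x)%N) X)%:R <= c%:R * (2 * old_count.+1%:R + 1 / del).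
Proof.
case: (pselect close_good_triple) => [|no_triple]; [by left | right].
pose no_new_left r z := (idx z == r) && ~~ `[< new_left_nbr z >].
pose no_new_right r z := (idx z == r) && ~~ `[< new_right_nbr z >].
pose wide r z := (idx z == r) && `[< wide_new_nbrs z >].
have cover : forall z, z \in X -> (n < idx z)%N ->
    has (fun r => [|| no_new_left r z, no_new_right r z | wide r z]) (index_iota n.+1 (n.+1 + c)).
  move=> z zX new_z; apply/hasP; exists (idx z).
    by rewrite mem_index_iota new_z addSn ltnS idx_le.
  rewrite /no_new_left /no_new_right /wide eqxx /=.
  case: (pselect (new_left_nbr z)) => [[L [lnb new_L]]|]; last by move=> /asboolPn ->.
  case: (pselect (new_right_nbr z)) => [[R' [rnb new_R]]|]; last by move=> /asboolPn ->; rewrite orbT.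
  apply/orP; right; apply/orP; right; apply/asboolP; exists L, R'; do 4 split => //.
  rewrite ltNge; apply/negP => narrow; apply: no_triple.
  exact: close_good_triple_of_narrow_nbrs zX lnb rnb new_L new_R narrow.
have per_index r : (count (fun z => [|| no_new_left r z, no_new_right r z | wide r z]) X)%:R
    <= 2 * old_count.+1%:R + 1 / del.
  apply: le_trans (_ : (count (no_new_left r) X + count (no_new_right r) X
                         + count (wide r) X)%:R <= _); first by rewrite ler_nat count_or3_le.
  have := count_no_new_left_nbr r; have := count_no_new_right_nbr r.
  rewrite -!(ler_nat R) => le_left le_right.
  have le_wide : (count (wide r) X)%:R <= 1 / del.
    by rewrite ler_pdivlMr // count_wide_new_nbrs.
  rewrite !natrD; lra.
apply: le_trans (_ : (\sum_(n.+1 <= r < n.+1 + c) (2 * old_count.+1%:R + 1 / del)) <= _).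
  apply: le_trans (_ : (\sum_(n.+1 <= r < n.+1 + c)
      count (fun z => [|| no_new_left r z, no_new_right r z | wide r z]) X)%:R <= _).
    by rewrite ler_nat; exact: count_le_sum_cover cover.
  by rewrite natr_sum; apply: ler_sum => r _; exact: per_index.
by rewrite sumr_const_nat addKn -[X in X <= _]mulr_natl.
Qed.

End NearestLowerNeighbours.

Lemma nat_down_ind (P : nat -> Prop) n : P n -> (forall i, (i < n)%N -> P i.+1 -> P i) ->
  forall i, (i <= n)%N -> P i.
Proof.
move=> Pn Pdown i le_in; rewrite -(subKn le_in).
elim: (n - i)%N (leq_subr i n) => [|d IH] le_dn; first by rewrite subn0.
apply: Pdown; first by rewrite -subn_gt0 subKn ?(ltnW le_dn).
by rewrite subnSK //; apply: IH; rewrite ltnW.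
Qed.

Section PlaneAlgebra.
Variable R : realType.
Implicit Types (u w x y e d : pt R).

Definition comb2 (s : R) (u w : pt R) : pt R := padd (pscale (1 - s) u) (pscale s w).
Definition comb3 (al be ga : R) (u1 u2 u3 : pt R) : pt R :=
  padd (padd (pscale al u1) (pscale be u2)) (pscale ga u3).

Lemma pscale1 u : pscale 1 u = u.
Proof. by case: u => ??; rewrite /pscale !mul1r. Qed.

Lemma pscaleA g h u : pscale g (pscale h u) = pscale (g * h) u.
Proof. by case: u => ??; rewrite /pscale !mulrA. Qed.

Lemma pscale_eq_div (l g : R) u w : l != 0 -> pscale l u = pscale g w -> u = pscale (g / l) w.
Proof.
move=> l_neq0; case: u w => u1 u2 [w1 w2]; rewrite /pscale /= => [[e1 e2]].
by congr pair; apply: (mulfI l_neq0); rewrite ?e1 ?e2; field.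
Qed.

Lemma psub_swap u w : psub u w = pscale (-1) (psub w u).
Proof. by case: u w => ?? [??]; rewrite /psub /pscale /=; congr pair; ring. Qed.

Lemma reflect_dirZ e d k : reflect_dir e (pscale k d) = pscale k (reflect_dir e d).
Proof.
by case: e d => ?? [??]; rewrite /reflect_dir /pscale /psub /pdot /=; congr pair; ring.
Qed.

Lemma reflect_dirK e d : pdot e e != 0 -> reflect_dir e (reflect_dir e d) = d.
Proof.
case: e d => ?? [??]; rewrite /reflect_dir /pscale /psub /pdot /= => ee_neq0.
by congr pair; field.
Qed.

Lemma sqr_add_eq0 (x y : R) : x * x + y * y = 0 -> x = 0 /\ y = 0.
Proof.
move=> sum0; have xx_ge0 : 0 <= x * x by rewrite -expr2 sqr_ge0.
have yy_ge0 : 0 <= y * y by rewrite -expr2 sqr_ge0.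
have xx0 : x * x = 0 by lra.
have yy0 : y * y = 0 by lra.
by move/eqP: xx0; move/eqP: yy0; rewrite !mulf_eq0 !orbb => /eqP -> /eqP ->.
Qed.

Lemma pdot_gt0_of_pcross u w : pcross u w != 0 -> 0 < pdot u u.
Proof.
case: u w => u1 u2 [w1 w2]; rewrite /pcross /pdot /= => cross_neq0.
rewrite lt_neqAle; apply/andP; split; last by nra.
by apply/eqP => /esym /sqr_add_eq0 [u10 u20]; move: cross_neq0; rewrite u10 u20 !mul0r subrr eqxx.
Qed.

Lemma pcross_antisym u w : pcross u w = - pcross w u.
Proof. by case: u w => ?? [??]; rewrite /pcross /=; ring. Qed.

Lemma pcrossZl k u w : pcross (pscale k u) w = k * pcross u w.
Proof. by case: u w => ?? [??]; rewrite /pcross /pscale /=; ring. Qed.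

Lemma pcrossZr k u w : pcross u (pscale k w) = k * pcross u w.
Proof. by case: u w => ?? [??]; rewrite /pcross /pscale /=; ring. Qed.

Lemma pcross_subZ u w k : pcross u (psub w (pscale k u)) = pcross u w.
Proof. by case: u w => ?? [??]; rewrite /pcross /psub /pscale /=; ring. Qed.

Lemma pcross_lin2 c1 s1 c2 s2 u w :
  pcross (padd (pscale c1 u) (pscale s1 w)) (padd (pscale c2 u) (pscale s2 w)) =
  (c1 * s2 - s1 * c2) * pcross u w.
Proof. by case: u w => ?? [??]; rewrite /pcross /padd /pscale /=; ring. Qed.

Lemma lagrange_identity u w : pdot u w ^+ 2 + pcross u w ^+ 2 = pdot u u * pdot w w.
Proof. by case: u w => ?? [??]; rewrite /pcross /pdot /=; ring. Qed.

Lemma psub_comb2_l rho u w : psub (comb2 rho u w) u = pscale rho (psub w u).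
Proof. by case: u w => ?? [??]; rewrite /comb2 /psub /padd /pscale /=; congr pair; ring. Qed.

Lemma psub_comb2_r kap u w : psub w (comb2 kap u w) = pscale (1 - kap) (psub w u).
Proof. by case: u w => ?? [??]; rewrite /comb2 /psub /padd /pscale /=; congr pair; ring. Qed.

Lemma psub_comb2_rl kap u w : kap != 0 ->
  psub w (comb2 kap u w) = pscale ((1 - kap) / kap) (psub (comb2 kap u w) u).
Proof.
by move=> ?; case: u w => ?? [??]; rewrite /comb2 /psub /padd /pscale /=; congr pair; field.
Qed.

Lemma psub_comb3 al be u x y :
  psub (comb3 (1 - al - be) al be u x y) u = padd (pscale al (psub x u)) (pscale be (psub y u)).
Proof.
by case: u x y => ?? [??] [??]; rewrite /comb3 /psub /padd /pscale /=; congr pair; ring.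
Qed.

Lemma comb2_as_comb3 t u x y : comb2 t x y = comb3 (1 - (1 - t) - t) (1 - t) t u x y.
Proof.
by case: u x y => ?? [??] [??]; rewrite /comb3 /comb2 /padd /pscale /=; congr pair; ring.
Qed.

Lemma comb2_cone u x y r1 r2 al be : al * r1 + be * r2 != 0 ->
  comb2 (be * r2 / (al * r1 + be * r2)) x y =
  comb2 (1 / (al * r1 + be * r2)) u (comb3 (1 - al - be) al be u (comb2 r1 u x) (comb2 r2 u y)).
Proof.
by move=> ?; case: u x y => ?? [??] [??]; rewrite /comb2 /comb3 /padd /pscale /=; congr pair; field.
Qed.

Lemma ray_continue x y s d t mu : 0 < t -> 0 < mu ->
  psub x s = pscale t d -> psub y x = pscale mu d ->
  psub y s = pscale (1 + t / mu) (psub y x) /\ y = comb2 ((mu + t) / t) s x.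
Proof.
case: x y s d => x1 x2 [y1 y2] [s1 s2] [d1 d2].
rewrite /psub /pscale /comb2 /padd /= => t_gt0 mu_gt0 [e1 e2] [f1 f2].
have t_neq0 : t != 0 by rewrite gt_eqF.
have mu_neq0 : mu != 0 by rewrite gt_eqF.
have -> : s1 = x1 - t * d1 by lra.
have -> : s2 = x2 - t * d2 by lra.
have -> : y1 = x1 + mu * d1 by lra.
have -> : y2 = x2 + mu * d2 by lra.
by split; congr pair; field.
Qed.

(* The reflection law at [y], read off the unfolding: the incoming ray comes from the
   mirror image [s0] of [s], the outgoing one continues the line from [s] through [y]. *)
Lemma reflection_law_transfer e s s0 x y z kap f :
  pdot e e != 0 -> 0 < kap < 1 -> 0 < f -> y = comb2 kap s z ->
  psub y x = pscale f (psub y s0) -> psub y s0 = reflect_dir e (psub y s) ->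
  exists mu, 0 < mu /\ psub z y = pscale mu (reflect_dir e (psub y x)).
Proof.
move=> ee_neq0 /andP [kap_gt0 kap_lt1] f_gt0 y_def yx yrefl.
exists ((1 - kap) / (kap * f)); split; first by apply: divr_gt0; [lra | apply: mulr_gt0].
rewrite yx reflect_dirZ yrefl reflect_dirK // y_def psub_comb2_rl ?gt_eqF // -y_def.
by case: (psub y s) => ??; rewrite /pscale /=; congr pair; field; rewrite ?gt_eqF.
Qed.

End PlaneAlgebra.

Section Angles.
Variable R : realType.

Lemma pdot_normalize (v : pt R) : 0 < pdot v v ->
  pdot (pscale (pnorm v)^-1 v) (pscale (pnorm v)^-1 v) = 1.
Proof.
move=> vv_gt0; rewrite /pnorm.
have sqr_sqrt := sqr_sqrtr (ltW vv_gt0).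
have sqrt_neq0 : Num.sqrt (pdot v v) != 0 by rewrite sqrtr_eq0 -ltNge.
move: sqr_sqrt sqrt_neq0; move: (Num.sqrt _) => q; case: v vv_gt0 => v1 v2.
rewrite /pdot /pscale /= expr2 => _ sqr_q q_neq0.
by transitivity ((v1 * v1 + v2 * v2) / (q * q)); [field | rewrite -sqr_q divff // mulf_neq0].
Qed.

Lemma pnorm_gt0 (v : pt R) : 0 < pdot v v -> 0 < pnorm v.
Proof. by move=> vv_gt0; rewrite /pnorm sqrtr_gt0. Qed.

Lemma gt0_of_sin_gt0 (y : R) : - pi < y -> 0 < sin y -> 0 < y.
Proof.
move=> gt_y sin_gt0; rewrite ltNge; apply/negP => le_y0.
have : 0 <= sin (- y) by apply: sin_ge0_pi; apply/andP; split; lra.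
by rewrite sinN; lra.
Qed.

Lemma polar_upper_half (w1 w2 : R) : 0 < w2 ->
  exists phi rho, 0 <= phi <= pi /\ 0 < rho /\ w1 = rho * cos phi /\ w2 = rho * sin phi.
Proof.
move=> w2_gt0; set rho := Num.sqrt (w1 ^+ 2 + w2 ^+ 2).
have sqr_rho : rho ^+ 2 = w1 ^+ 2 + w2 ^+ 2 by rewrite sqr_sqrtr // addr_ge0 // sqr_ge0.
have rho_gt0 : 0 < rho by rewrite sqrtr_gt0; nra.
have rho_neq0 : rho != 0 by rewrite gt_eqF.
set y := w1 / rho.
have y_bound : y ^+ 2 <= 1.
  rewrite -(ler_pM2r (exprn_gt0 2 rho_gt0)) mul1r -exprMn /y mulfVK //.
  by rewrite sqr_rho lerDl sqr_ge0.
have y_in : -1 <= y <= 1 by rewrite expr2 in y_bound; apply/andP; split; nra.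
exists (acos y), rho; split; first by rewrite acos_ge0 ?acos_lepi //; case/andP: y_in.
split => //; rewrite acosK ?in_itv //= sin_acos //; split; first by rewrite /y mulrC mulfVK.
have -> : 1 - y ^+ 2 = (w2 / rho) ^+ 2.
  apply: (mulIf (x := rho ^+ 2)); first by rewrite expf_neq0.
  by rewrite mulrBl mul1r /y !expr_div_n !mulfVK ?expf_neq0 // sqr_rho; ring.
by rewrite sqrtr_sqr ger0_norm ?divr_ge0 ?ltW // mulrC mulfVK.
Qed.

Lemma positive_comb_angle (f1 f2 al be : R) : 0 <= f1 -> f1 < f2 -> f2 < pi ->
  0 < al -> 0 < be -> exists phi rho, f1 < phi < f2 /\ 0 < rho /\
    al * cos f1 + be * cos f2 = rho * cos phi /\ al * sin f1 + be * sin f2 = rho * sin phi.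
Proof.
move=> f1_ge0 lt_f12 f2_lt al_gt0 be_gt0.
have sin2_gt0 : 0 < sin f2 by apply: sin_gt0_pi; apply/andP; split; lra.
have sin1_ge0 : 0 <= sin f1 by apply: sin_ge0_pi; apply/andP; split; lra.
have sin21_gt0 : 0 < sin (f2 - f1) by apply: sin_gt0_pi; apply/andP; split; lra.
have w2_gt0 : 0 < al * sin f1 + be * sin f2 by nra.
have [phi [rho [/andP [phi_ge0 phi_le] [rho_gt0 [e1 e2]]]]] :=
  polar_upper_half (al * cos f1 + be * cos f2) w2_gt0.
exists phi, rho; split => //.
have sin_phi1 : rho * sin (phi - f1) = be * sin (f2 - f1).
  transitivity (rho * sin phi * cos f1 - rho * cos phi * sin f1); first by rewrite sinB; ring.
  by rewrite -e1 -e2 sinB; ring.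
have sin_phi2 : rho * sin (f2 - phi) = al * sin (f2 - f1).
  transitivity (rho * cos phi * sin f2 - rho * sin phi * cos f2); first by rewrite sinB; ring.
  by rewrite -e1 -e2 sinB; ring.
apply/andP; split; rewrite -subr_gt0; apply: gt0_of_sin_gt0; try lra.
- by rewrite -(pmulr_rgt0 _ rho_gt0) sin_phi1 mulr_gt0.
- by rewrite -(pmulr_rgt0 _ rho_gt0) sin_phi2 mulr_gt0.
Qed.

End Angles.

Inductive vtx := VA | VB | VC.
Definition vtx_eqb (u v : vtx) : bool :=
  match u, v with VA, VA | VB, VB | VC, VC => true | _, _ => false end.
Lemma vtx_eqP : Equality.axiom vtx_eqb. Proof. by case; case; constructor. Qed.
HB.instance Definition _ := hasDecEq.Build vtx vtx_eqP.

Definition next_vtx (v : vtx) : vtx := match v with VA => VB | VB => VC | VC => VA end.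

Section Triangle.
Variable R : realType.
Variables a b c : pt R.
Hypothesis nd : tri_nondegenerate a b c.

Definition vert (v : vtx) : pt R := match v with VA => a | VB => b | VC => c end.

Definition tri_det : R := pcross (psub b a) (psub c a).

Definition bary (v : vtx) (y : pt R) : R := match v with
  | VA => pcross (psub b y) (psub c y) / tri_det
  | VB => pcross (psub c y) (psub a y) / tri_det
  | VC => pcross (psub a y) (psub b y) / tri_det end.

Lemma bary_comb2 v s u w : bary v (comb2 s u w) = (1 - s) * bary v u + s * bary v w.
Proof.
by case: v; case: u w => ?? [??]; rewrite /bary /comb2 /pcross /psub /padd /pscale /=; ring.
Qed.

Lemma bary_comb3 v al be ga u1 u2 u3 : al + be + ga = 1 ->
  bary v (comb3 al be ga u1 u2 u3) = al * bary v u1 + be * bary v u2 + ga * bary v u3.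
Proof.
move=> sum1; have -> : ga = 1 - al - be by rewrite -sum1; ring.
by case: v; case: u1 u2 u3 => ?? [??] [??]; rewrite /bary /comb3 /pcross /psub /padd /pscale /=; ring.
Qed.

Lemma bary_vert v w : bary v (vert w) = if vtx_eqb v w then 1 else 0.
Proof.
move: nd; rewrite /tri_nondegenerate => ?.
by case: v; case: w; rewrite /bary /tri_det /pcross /psub /=; field.
Qed.

Lemma bary_vert_self v : bary v (vert v) = 1.
Proof. by rewrite bary_vert; case: v. Qed.

Lemma bary_vert_ge0 v w : 0 <= bary w (vert v).
Proof. by rewrite bary_vert; case: ifP. Qed.

Lemma bary_sum y : bary VA y + bary VB y + bary VC y = 1.
Proof.
move: nd; rewrite /tri_nondegenerate => ?.
by case: y => ??; rewrite /bary /tri_det /pcross /psub /=; field.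
Qed.

Lemma bary_sum3 s s1 s2 y : s != s1 -> s != s2 -> s1 != s2 ->
  bary s y + bary s1 y + bary s2 y = 1.
Proof. by have := bary_sum y; case: s; case: s1; case: s2 => //=; lra. Qed.

Lemma bary_recon y : y = comb3 (bary VA y) (bary VB y) (bary VC y) a b c.
Proof.
move: nd; rewrite /tri_nondegenerate => ?; case: y => ??.
by rewrite /comb3 /bary /tri_det /pcross /psub /padd /pscale /=; congr pair; field.
Qed.

Lemma bary_inj y z : (forall v, bary v y = bary v z) -> y = z.
Proof. by move=> eq_bary; rewrite (bary_recon y) (bary_recon z) !eq_bary. Qed.

Lemma bary_inj2 s1 s2 y z : s1 != s2 ->
  bary s1 y = bary s1 z -> bary s2 y = bary s2 z -> y = z.
Proof.
move=> neq12 eq1 eq2; apply: bary_inj => v.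
have := bary_sum y; have := bary_sum z.
by case: s1 eq1 neq12; case: s2 eq2; case: v => //= eq2 eq1 _; lra.
Qed.

Lemma vertexP p : is_vertex a b c p <-> exists v, p = vert v.
Proof.
split; first by case=> [->|[->|->]]; [exists VA|exists VB|exists VC].
by case=> [[]] ->; rewrite /is_vertex; tauto.
Qed.

Lemma interiorP y : in_interior a b c y <-> forall v, 0 < bary v y.
Proof.
split.
- case=> al [be [ga [al_gt0 [be_gt0 [ga_gt0 [sum1 ->]]]]]] v.
  change (0 < bary v (comb3 al be ga (vert VA) (vert VB) (vert VC))).
  by rewrite bary_comb3 //; case: v; rewrite !bary_vert /=; lra.
- move=> bary_gt0; exists (bary VA y), (bary VB y), (bary VC y).
  by do 3 (split; first exact: bary_gt0); split; [exact: bary_sum | exact: bary_recon].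
Qed.

Definition on_side (v : vtx) (y : pt R) : Prop := bary v y = 0 /\ (forall w, w != v -> 0 < bary w y).
Definition side_of (y : pt R) : vtx := if bary VA y == 0 then VA else if bary VB y == 0 then VB else VC.
Definition side_start (v : vtx) : pt R := vert (next_vtx v).
Definition side_end (v : vtx) : pt R := vert (next_vtx (next_vtx v)).
Definition side_dir (v : vtx) : pt R := psub (side_end v) (side_start v).

Lemma on_side_of v y : on_side v y -> side_of y = v.
Proof.
case=> bary0 bary_gt0; rewrite /side_of; case: v bary0 bary_gt0 => bary0 bary_gt0.
- by rewrite bary0 eqxx.
- by rewrite bary0 eqxx gt_eqF //; apply: bary_gt0.
- by rewrite !gt_eqF //; apply: bary_gt0.
Qed.

Lemma on_side_ge0 v y w : on_side v y -> 0 <= bary w y.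
Proof.
case=> bary0 bary_gt0; case: (w =P v) => [->|/eqP neq_wv]; first by rewrite bary0.
exact/ltW/bary_gt0.
Qed.

Lemma on_side_comb2 s t x y : 0 < t < 1 -> on_side s x -> on_side s y -> on_side s (comb2 t x y).
Proof.
move=> /andP [t_gt0 t_lt1] [x0 x_gt0] [y0 y_gt0].
split; first by rewrite bary_comb2 x0 y0; ring.
by move=> w neq_ws; rewrite bary_comb2; have := x_gt0 w neq_ws; have := y_gt0 w neq_ws; nra.
Qed.

Lemma on_side_open_seg v y : on_side v y <-> on_open_seg (side_start v) (side_end v) y.
Proof.
split.
- case=> bary0 bary_gt0; have sum1 := bary_sum y.
  case: v bary0 bary_gt0 => bary0 bary_gt0;
  [have b1 := bary_gt0 VB isT; have b2 := bary_gt0 VC isT; exists (bary VC y)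
  |have b1 := bary_gt0 VA isT; have b2 := bary_gt0 VC isT; exists (bary VA y)
  |have b1 := bary_gt0 VA isT; have b2 := bary_gt0 VB isT; exists (bary VB y)];
  (split; [apply/andP; split; lra|]); apply: bary_inj => w;
  rewrite -/(comb2 _ _ _) bary_comb2 /side_start /side_end;
  case: w; rewrite !bary_vert; simpl vtx_eqb; cbv iota; lra.
- case=> l [/andP [l_gt0 l_lt1] ->]; rewrite -/(comb2 _ _ _).
  case: v; (split; [rewrite bary_comb2 /side_start /side_end !bary_vert; simpl vtx_eqb; cbv iota; lra|]);
  case=> // _; rewrite bary_comb2 /side_start /side_end !bary_vert; simpl vtx_eqb; cbv iota; lra.
Qed.

Lemma on_side_dirP y e : on_side_dir a b c y e <-> exists v, on_side v y /\ e = side_dir v.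
Proof.
split.
- case=> [[y_on ->]|[[y_on ->]|[y_on ->]]].
  + by exists VC; split => //; apply/on_side_open_seg.
  + by exists VA; split => //; apply/on_side_open_seg.
  + by exists VB; split => //; apply/on_side_open_seg.
- case=> v [/on_side_open_seg y_on ->]; case: v y_on => y_on.
  + by right; left.
  + by right; right.
  + by left.
Qed.

Lemma seg_not_inside u w v : open_seg_inside a b c u w -> bary v u = 0 -> bary v w = 0 -> False.
Proof.
move=> inside u0 w0; have /interiorP := inside (1/2) ltac:(apply/andP; split; lra).
by move=> /(_ v); rewrite -/(comb2 _ _ _) bary_comb2 u0 w0; lra.
Qed.

Lemma seg_inside u w : (forall v, 0 <= bary v u) -> (forall v, 0 <= bary v w) ->
  (forall v, 0 < bary v u \/ 0 < bary v w) -> open_seg_inside a b c u w.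
Proof.
move=> u_ge0 w_ge0 one_gt0 t /andP [t_gt0 t_lt1]; apply/interiorP => v.
by rewrite -/(comb2 _ _ _) bary_comb2; have := u_ge0 v; have := w_ge0 v; case: (one_gt0 v); nra.
Qed.

Lemma seg_side_side v1 v2 u w : v1 != v2 -> on_side v1 u -> on_side v2 w ->
  open_seg_inside a b c u w.
Proof.
move=> neq12 u_on w_on; apply: seg_inside => [v|v|v]; [exact: on_side_ge0 u_on|exact: on_side_ge0 w_on|].
case: (v =P v1) => [->|/eqP neq]; last by left; case: u_on => _; apply.
by right; case: w_on => _; apply.
Qed.

Lemma seg_side_vert v u : on_side v u -> open_seg_inside a b c u (vert v).
Proof.
move=> u_on; apply: seg_inside => [w|w|w]; [exact: on_side_ge0 u_on|exact: bary_vert_ge0|].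
case: (w =P v) => [->|/eqP neq]; last by left; case: u_on => _; apply.
by right; rewrite bary_vert_self; lra.
Qed.

Lemma seg_vert_side v u : on_side v u -> open_seg_inside a b c (vert v) u.
Proof.
move=> u_on; apply: seg_inside => [w|w|w]; [exact: bary_vert_ge0|exact: on_side_ge0 u_on|].
case: (w =P v) => [->|/eqP neq]; last by right; case: u_on => _; apply.
by left; rewrite bary_vert_self; lra.
Qed.

Lemma side_dir_neq0 v : pdot (side_dir v) (side_dir v) != 0.
Proof.
apply/eqP => dd0; have same : side_end v = side_start v.
  move: dd0; rewrite /side_dir /pdot; case: (side_end v) (side_start v) => [x1 x2] [y1 y2].
  by rewrite /psub /= => /sqr_add_eq0 [e1 e2]; congr pair; lra.
move: (congr1 (bary (next_vtx v)) same); rewrite /side_end /side_start !bary_vert.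
by clear dd0 same; case: v => /= /eqP; rewrite ?oner_eq0 // eq_sym oner_eq0.
Qed.

Lemma on_side_line v y : bary v y = 0 ->
  y = comb2 (bary (next_vtx (next_vtx v)) y) (side_start v) (side_end v).
Proof.
move=> bary0; have sum1 := bary_sum y.
apply: bary_inj => w; rewrite bary_comb2 /side_start /side_end.
by case: v bary0 => bary0; case: w; rewrite !bary_vert; simpl vtx_eqb; cbv iota; simpl next_vtx; lra.
Qed.

Definition mirror (v : vtx) (y : pt R) : pt R :=
  padd (side_start v) (reflect_dir (side_dir v) (psub y (side_start v))).

Lemma psub_mirror_l v p y : bary v p = 0 ->
  psub (mirror v y) p = reflect_dir (side_dir v) (psub y p).
Proof.
move=> /on_side_line ->; have := side_dir_neq0 v.
rewrite /mirror /side_dir; set t := bary _ _.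
move: (side_start v) (side_end v) => [u1 u2] [w1 w2]; case: y => ??.
by rewrite /comb2 /reflect_dir /pscale /psub /padd /pdot /= => ?; congr pair; field.
Qed.

Lemma psub_mirror_r v y z : bary v y = 0 ->
  psub y (mirror v z) = reflect_dir (side_dir v) (psub y z).
Proof. by move=> y0; rewrite psub_swap psub_mirror_l // -reflect_dirZ -psub_swap. Qed.

Lemma psub_mirror_back v y z : bary v y = 0 ->
  psub y z = reflect_dir (side_dir v) (psub y (mirror v z)).
Proof. by move=> y0; rewrite psub_mirror_r // reflect_dirK // side_dir_neq0. Qed.

Definition traj (x : R) (k : nat) (p : nat -> pt R) : Prop :=
  p 0%N = a /\
  is_vertex a b c (p k.+1) /\
  (forall i : nat, (i <= k)%N -> open_seg_inside a b c (p i) (p i.+1)) /\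
  (exists l : R, 0 < l /\ psub (p 1%N) a = pscale l (dir_of a b c x)) /\
  (forall i : nat, (1 <= i <= k)%N ->
     exists e : pt R, on_side_dir a b c (p i) e /\
     exists mu : R, 0 < mu /\
       psub (p i.+1) (p i) = pscale mu (reflect_dir e (psub (p i) (p i.-1)))).

(* [unfold_src p i] is the image of [a] in the unfolding along the first [i] bounces:
   the trajectory from [p i] onwards continues the straight line from it. *)
Fixpoint unfold_src (p : nat -> pt R) (i : nat) : pt R :=
  match i with 0%N => a | i'.+1 => mirror (side_of (p i'.+1)) (unfold_src p i') end.

Lemma unfold_src_mirror (p : nat -> pt R) i y : (1 <= i)%N -> bary (side_of (p i)) y = 0 ->
  psub y (unfold_src p i.-1) = reflect_dir (side_dir (side_of (p i))) (psub y (unfold_src p i)).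
Proof. by case: i => // i _ y0; rewrite /= -psub_mirror_back. Qed.

Section Trajectory.
Variables (x : R) (k : nat) (p : nat -> pt R).
Hypothesis tr : traj x k p.

Lemma traj_bounce i : (1 <= i <= k)%N -> on_side (side_of (p i)) (p i) /\
  exists mu, 0 < mu /\ psub (p i.+1) (p i) =
    pscale mu (reflect_dir (side_dir (side_of (p i))) (psub (p i) (p i.-1))).
Proof.
case: tr => _ [_ [_ [_ bounce]]] /bounce [e [/on_side_dirP [v [pv ->]] refl_law]].
by rewrite (on_side_of pv).
Qed.

Lemma traj_on_side i : (1 <= i <= k)%N -> on_side (side_of (p i)) (p i).
Proof. by move=> /traj_bounce []. Qed.

Lemma traj_seg i : (i <= k)%N -> open_seg_inside a b c (p i) (p i.+1).
Proof. by case: tr => _ [_ [seg _]]; apply: seg. Qed.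

Lemma traj_side_change i : (1 <= i)%N -> (i < k)%N -> side_of (p i) != side_of (p i.+1).
Proof.
move=> i_ge1 lt_ik; apply/eqP => same.
have [pi0 _] := traj_on_side (i := i) ltac:(by rewrite i_ge1 ltnW).
have [pi10 _] := traj_on_side (i := i.+1) ltac:(by rewrite lt_ik).
by apply: (seg_not_inside (traj_seg (ltnW lt_ik)) pi0); rewrite same.
Qed.

Lemma traj_len_gt0 : (0 < k)%N.
Proof.
case: k tr => // -[p0 [/vertexP [w pw] [seg _]]].
have := seg 0%N (leqnn _); rewrite p0 pw (_ : a = vert VA) // => seg0; exfalso.
by case: w {pw} seg0 => seg0;
  [apply: (seg_not_inside seg0 (v := VB)) | apply: (seg_not_inside seg0 (v := VC))
  | apply: (seg_not_inside seg0 (v := VB))]; rewrite bary_vert.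
Qed.

Lemma traj_first_side : side_of (p 1%N) = VA.
Proof.
have [p10 _] := traj_on_side (i := 1%N) ltac:(by rewrite traj_len_gt0).
have := traj_seg (leq0n k); case: tr => -> _; rewrite (_ : a = vert VA) //.
move: p10; case: (side_of (p 1%N)) => // p10 seg0; exfalso.
- by apply: (seg_not_inside seg0 (v := VB) _ p10); rewrite bary_vert.
- by apply: (seg_not_inside seg0 (v := VC) _ p10); rewrite bary_vert.
Qed.

Lemma traj_last_vertex : p k.+1 = vert (side_of (p k)).
Proof.
have [pk0 _] := traj_on_side (i := k) ltac:(by rewrite traj_len_gt0 leqnn).
have seg := traj_seg (leqnn k).
case: tr => _ [/vertexP [w pw] _]; rewrite pw in seg *.
move: pk0 seg; case: (side_of (p k)) => pk0 seg; case: w pw seg => // pw seg; exfalso;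
  (apply: (seg_not_inside seg _ _); [exact: pk0 | by rewrite bary_vert]).
Qed.

Lemma traj_unfold_aux i : (1 <= i <= k.+1)%N ->
  (exists t, 1 <= t /\ psub (p i) (unfold_src p i.-1) = pscale t (psub (p i) (p i.-1))) /\
  ((i <= k)%N -> exists rho, 1 < rho /\ p i.+1 = comb2 rho (unfold_src p i) (p i)).
Proof.
elim: i => // i IH /andP [i_ge0 le_ik1].
have unfold_src_ray : exists t, 1 <= t /\
    psub (p i.+1) (unfold_src p i) = pscale t (psub (p i.+1) (p i)).
  case: i IH i_ge0 le_ik1 => [|i] IH _ le_ik1.
  - by exists 1; split => //=; case: tr => -> _; rewrite pscale1.
  - have [[t [t_ge1 ray]] _] := IH ltac:(by rewrite /= ltnW).
    have [[pi0 _] [mu [mu_gt0 refl_law]]] := traj_bounce (i := i.+1) ltac:(by []).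
    have ray' : psub (p i.+1) (unfold_src p i.+1) =
        pscale t (reflect_dir (side_dir (side_of (p i.+1))) (psub (p i.+1) (p i))).
      by rewrite /= psub_mirror_r // ray reflect_dirZ.
    have [-> _] := ray_continue (lt_le_trans ltr01 t_ge1) mu_gt0 ray' refl_law.
    by exists (1 + t / mu); split => //; rewrite lerDl divr_ge0 // ltW // (lt_le_trans ltr01 t_ge1).
split => // le_ik.
have [[pi0 _] [mu [mu_gt0 refl_law]]] := traj_bounce (i := i.+1) ltac:(by rewrite le_ik).
case: unfold_src_ray => t [t_ge1 ray].
have ray' : psub (p i.+1) (unfold_src p i.+1) =
    pscale t (reflect_dir (side_dir (side_of (p i.+1))) (psub (p i.+1) (p i))).
  by rewrite /= psub_mirror_r // ray reflect_dirZ.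
have t_gt0 : 0 < t by apply: (lt_le_trans ltr01 t_ge1).
have [_ ->] := ray_continue t_gt0 mu_gt0 ray' refl_law.
by exists ((mu + t) / t); split => //; rewrite ltr_pdivlMr // mul1r ltrDr.
Qed.

Lemma traj_unfold i : (1 <= i <= k)%N ->
  exists rho, 1 < rho /\ p i.+1 = comb2 rho (unfold_src p i) (p i).
Proof.
move=> /andP [i_ge1 le_ik].
by have [_] := traj_unfold_aux (i := i) ltac:(by rewrite i_ge1 (leq_trans le_ik)); apply.
Qed.

End Trajectory.

Let th := angle_at a b c.

Lemma dir_ofE z : dir_of a b c z =
  padd (pscale (cos (z * th)) (uhat a b)) (pscale (sin (z * th)) (nperp a b c)).
Proof. by []. Qed.

Lemma pdot_ab_gt0 : 0 < pdot (psub b a) (psub b a).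
Proof. exact: (pdot_gt0_of_pcross nd). Qed.

Lemma pdot_ac_gt0 : 0 < pdot (psub c a) (psub c a).
Proof. by apply: (pdot_gt0_of_pcross (w := psub b a)); rewrite pcross_antisym oppr_eq0. Qed.

Lemma angle_at_bounds : 0 < th < pi.
Proof.
set u := uhat a b; set w := uhat a c.
have uu1 : pdot u u = 1 by exact: pdot_normalize pdot_ab_gt0.
have ww1 : pdot w w = 1 by exact: pdot_normalize pdot_ac_gt0.
have uw_neq0 : pcross u w != 0.
  have nb := lt0r_neq0 (pnorm_gt0 pdot_ab_gt0); have nc := lt0r_neq0 (pnorm_gt0 pdot_ac_gt0).
  by rewrite /u /w /uhat pcrossZl pcrossZr !mulf_neq0 ?invr_eq0.
rewrite /th /angle_at -/u -/w.
have := lagrange_identity u w; rewrite uu1 ww1 mul1r.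
have : 0 < pcross u w ^+ 2 by rewrite exprn_even_gt0 //= uw_neq0 orbT.
move: (pdot u w) (pcross u w ^+ 2) => d e e_gt0 de1.
have d_gt : -1 < d by nra.
have d_lt : d < 1 by nra.
by rewrite acos_gt0 ?acos_ltpi ?(ltW d_gt) ?(ltW d_lt) ?d_gt ?d_lt.
Qed.

Lemma pcross_uhat_nperp : pcross (uhat a b) (nperp a b c) != 0.
Proof.
have nb := lt0r_neq0 (pnorm_gt0 pdot_ab_gt0).
have uc_neq0 : pcross (uhat a b) (psub c a) != 0 by rewrite /uhat pcrossZl mulf_neq0 ?invr_eq0.
set v' := psub (psub c a) (pscale (pdot (psub c a) (uhat a b)) (uhat a b)).
have uv' : pcross (uhat a b) v' = pcross (uhat a b) (psub c a) by rewrite /v' pcross_subZ.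
have v'v'_gt0 : 0 < pdot v' v'.
  by apply: (pdot_gt0_of_pcross (w := uhat a b)); rewrite pcross_antisym oppr_eq0 uv'.
by rewrite /nperp -/v' pcrossZr uv' mulf_neq0 // invr_eq0 gt_eqF // pnorm_gt0.
Qed.

Lemma dir_of_parallel z1 z2 g : 0 <= z1 <= 1 -> 0 <= z2 <= 1 ->
  dir_of a b c z1 = pscale g (dir_of a b c z2) -> z1 = z2.
Proof.
move=> /andP [z1_ge0 z1_le1] /andP [z2_ge0 z2_le1] parallel.
have /andP [th_gt0 th_lt] := angle_at_bounds.
have sin0 : sin (z2 * th - z1 * th) = 0.
  have : pcross (dir_of a b c z1) (dir_of a b c z2) = 0.
    by rewrite parallel pcrossZl; case: (dir_of _ _ _ _) => ??; rewrite /pcross /=; ring.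
  rewrite !dir_ofE pcross_lin2 => /eqP; rewrite mulf_eq0 (negbTE pcross_uhat_nperp) orbF.
  by rewrite sinB => /eqP; lra.
case: (ltrgtP z1 z2) => // lt_z; exfalso.
- have : 0 < sin (z2 * th - z1 * th) by apply: sin_gt0_pi; apply/andP; split; nra.
  by rewrite sin0 ltxx.
- have : 0 < sin (z1 * th - z2 * th) by apply: sin_gt0_pi; apply/andP; split; nra.
  by rewrite -opprB sinN sin0 oppr0 ltxx.
Qed.

Lemma dir_of_cone z1 z2 al be : 0 <= z1 -> z1 < z2 -> z2 <= 1 -> 0 < al -> 0 < be ->
  exists x L, z1 < x < z2 /\ 0 < L /\
    padd (pscale al (dir_of a b c z1)) (pscale be (dir_of a b c z2)) = pscale L (dir_of a b c x).
Proof.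
move=> z1_ge0 lt_z12 z2_le1 al_gt0 be_gt0.
have /andP [th_gt0 th_lt] := angle_at_bounds.
have [phi [rho [/andP [phi_gt phi_lt] [rho_gt0 [e1 e2]]]]] :=
  @positive_comb_angle _ (z1 * th) (z2 * th) al be ltac:(nra) ltac:(nra) ltac:(nra) al_gt0 be_gt0.
exists (phi / th), rho; split; last split => //.
  by rewrite ltr_pdivlMr ?ltr_pdivrMr // phi_gt phi_lt.
rewrite !dir_ofE mulfVK ?gt_eqF //.
move: (uhat a b) (nperp a b c) => [u1 u2] [n1 n2]; rewrite /padd /pscale /=.
set c1 := cos (z1 * th); set c2 := cos (z2 * th); set s1 := sin (z1 * th); set s2 := sin (z2 * th).
congr pair.
- transitivity ((al * c1 + be * c2) * u1 + (al * s1 + be * s2) * n1); first by ring.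
  by rewrite e1 e2; ring.
- transitivity ((al * c1 + be * c2) * u2 + (al * s1 + be * s2) * n2); first by ring.
  by rewrite e1 e2; ring.
Qed.

(* One step back along the unfolding: [x], [y] on the side [s] continue from [s0] to
   [x'], [y'], and [y0] lies in the cone from [s0] spanned by [x'] and [y']; then the
   segment from [s0] to [y0] crosses the side [s] between [x] and [y]. *)
Lemma cone_step s s0 x y x' y' y0 r1 r2 al be :
  1 < r1 -> 1 < r2 -> 0 < al -> 0 < be ->
  x' = comb2 r1 s0 x -> y' = comb2 r2 s0 y -> on_side s x -> on_side s y ->
  0 < bary s y0 -> bary s s0 < 0 -> y0 = comb3 (1 - al - be) al be s0 x' y' ->
  exists C kap t, 0 < t < 1 /\ C = comb2 t x y /\ on_side s C /\ 0 < kap < 1 /\ C = comb2 kap s0 y0.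
Proof.
move=> r1_gt1 r2_gt1 al_gt0 be_gt0 x'_def y'_def x_on y_on y0_gt0 s0_lt0 y0_def.
set m := al * r1 + be * r2.
have m_gt0 : 0 < m by rewrite /m; nra.
set t := be * r2 / m.
have t01 : 0 < t < 1.
  apply/andP; split; first by rewrite /t divr_gt0 //; nra.
  by rewrite /t ltr_pdivrMr // mul1r /m; nra.
have C_on := on_side_comb2 t01 x_on y_on.
have C_eq : comb2 t x y = comb2 (1 / m) s0 y0.
  by rewrite y0_def x'_def y'_def /t; exact: comb2_cone (lt0r_neq0 m_gt0).
exists (comb2 t x y), (1 / m), t; do 3 (split => //).
split => //; apply/andP; split; first by rewrite divr_gt0.
case: C_on => C0 _; move: C0; rewrite C_eq bary_comb2 => C0.
rewrite ltNge; apply/negP => m_le1.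
have : 0 <= (1 - 1 / m) * bary s s0 by apply: mulr_le0; lra.
have : 0 < 1 / m * bary s y0 by apply: mulr_gt0 => //; rewrite divr_gt0.
by lra.
Qed.

(* Where the continuations part onto the two other sides [s1] and [s2], their common
   vertex lies in the open cone from [s0] spanned by [x'] and [y']. *)
Lemma cone_apex s s1 s2 s0 x y x' y' r1 r2 :
  s != s1 -> s != s2 -> s1 != s2 -> 1 < r1 -> 1 < r2 ->
  x' = comb2 r1 s0 x -> y' = comb2 r2 s0 y -> on_side s x -> on_side s y ->
  on_side s1 x' -> on_side s2 y' ->
  exists al be, 0 < al /\ 0 < be /\ vert s = comb3 (1 - al - be) al be s0 x' y'.
Proof.
move=> n1 n2 n12 r1_gt1 r2_gt1 x'_def y'_def [x0 x_gt0] [y0 y_gt0] [x'0 x'_gt0] [y'0 y'_gt0].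
have := x_gt0 s1 ltac:(by rewrite eq_sym); have := y_gt0 s2 ltac:(by rewrite eq_sym).
have := x'_gt0 s2 ltac:(by rewrite eq_sym); have := y'_gt0 s1 n12.
have := x'_gt0 s n1; have := y'_gt0 s n2.
have := bary_sum3 x' n1 n2 n12; have := bary_sum3 y' n1 n2 n12; have := bary_sum3 s0 n1 n2 n12.
have := bary_comb2 s1 r1 s0 x; rewrite -x'_def x'0.
have := bary_comb2 s2 r2 s0 y; rewrite -y'_def y'0.
have := bary_comb2 s r1 s0 x; rewrite -x'_def x0.
set A1 := bary s1 s0; set A2 := bary s2 s0; set As := bary s s0.
set p2 := bary s2 x'; set q1 := bary s1 y'.
move=> e3 e2 e1 sA sQ sP lsy' lsx' q1_gt0 p2_gt0 l2y l1x.
have A1_gt0 : 0 < A1 by nra.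
have A2_gt0 : 0 < A2 by nra.
have As_lt0 : As < 0 by nra.
have p2_lt1 : p2 < 1 by lra.
have q1_lt1 : q1 < 1 by lra.
set K := A2 / p2 + A1 / q1.
have K_gt1 : 1 < K.
  have : A2 < A2 / p2 by rewrite ltr_pdivlMr //; nra.
  have : A1 < A1 / q1 by rewrite ltr_pdivlMr //; nra.
  by rewrite /K; lra.
have K1_neq0 : K - 1 != 0 by rewrite subr_eq0 gt_eqF.
have p2_neq0 := lt0r_neq0 p2_gt0; have q1_neq0 := lt0r_neq0 q1_gt0.
have denom : A2 * q1 + A1 * p2 + -1 * (p2 * q1) = p2 * q1 * (K - 1).
  by rewrite /K; field; rewrite q1_neq0 p2_neq0.
exists (A2 / (p2 * (K - 1))), (A1 / (q1 * (K - 1))); split; last split.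
- by rewrite divr_gt0 // mulr_gt0 // subr_gt0.
- by rewrite divr_gt0 // mulr_gt0 // subr_gt0.
apply: (bary_inj2 n12).
- rewrite bary_comb3; last by ring.
  rewrite bary_vert (negbTE (_ : ~~ vtx_eqb s1 s)); last by rewrite eq_sym in n1.
  rewrite -/A1 x'0 -/q1 /K; field.
  by rewrite q1_neq0 p2_neq0 /= denom !mulf_neq0.
- rewrite bary_comb3; last by ring.
  rewrite bary_vert (negbTE (_ : ~~ vtx_eqb s2 s)); last by rewrite eq_sym in n2.
  rewrite -/A2 y'0 -/p2 /K; field.
  by rewrite q1_neq0 p2_neq0 /= denom !mulf_neq0.
Qed.

Section TwoDiagonals.
Variables (z1 z2 : R) (k : nat) (p q : nat -> pt R).
Hypotheses (trp : traj z1 k p) (trq : traj z2 k q).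
Hypotheses (z1_ge0 : 0 <= z1) (lt_z12 : z1 < z2) (z2_le1 : z2 <= 1).

Lemma unfold_src_eq m : (forall i, (1 <= i <= m)%N -> side_of (p i) = side_of (q i)) ->
  unfold_src p m = unfold_src q m.
Proof.
elim: m => // m IH same /=; rewrite same ?leqnn // IH // => i /andP [i_ge1 le_im].
by apply: same; rewrite i_ge1 ltnW.
Qed.

(* Equal side sequences unfold both diagonals onto the same straight line from [a]
   to the same final vertex, so their initial directions coincide. *)
Lemma same_sides_impossible : (forall i, (1 <= i <= k)%N -> side_of (p i) = side_of (q i)) -> False.
Proof.
move=> same.
have same_src i : (i <= k)%N -> unfold_src p i = unfold_src q i.
  by move=> le_ik; apply: unfold_src_eq => l /andP [l1 l2]; apply: same; rewrite l1 (leq_trans l2).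
pose parallel i := exists g, 0 < g /\
  psub (p i.+1) (unfold_src p i) = pscale g (psub (q i.+1) (unfold_src p i)).
have parallel0 : parallel 0%N.
  apply: (nat_down_ind (P := parallel) (n := k)) => //.
    exists 1; split => //; rewrite pscale1 (traj_last_vertex trp) (traj_last_vertex trq) same //.
    by rewrite (traj_len_gt0 trp) leqnn.
  move=> i lt_ik [g [g_gt0 par]].
  have i1k : (1 <= i.+1 <= k)%N by [].
  have [rp [rp_gt1 p_next]] := traj_unfold trp i1k.
  have [rq [rq_gt1 q_next]] := traj_unfold trq i1k.
  rewrite -(same_src _ lt_ik) in q_next.
  rewrite p_next q_next !psub_comb2_l pscaleA in par.
  have {}par := pscale_eq_div (lt0r_neq0 (lt_trans ltr01 rp_gt1)) par.
  have [pi0 _] := traj_on_side trp i1k; have [qi0 _] := traj_on_side trq i1k.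
  rewrite -(same _ i1k) in qi0.
  exists (g * rq / rp); split; first by rewrite divr_gt0 ?mulr_gt0 //; lra.
  rewrite (unfold_src_mirror (p := p) (i := i.+1) isT pi0).
  rewrite (unfold_src_mirror (p := p) (i := i.+1) isT qi0).
  by rewrite par reflect_dirZ.
case: parallel0 => g [g_gt0]; rewrite /=.
case: trp => _ [_ [_ [[l1 [l1_gt0 ->]] _]]]; case: trq => _ [_ [_ [[l2 [l2_gt0 ->]] _]]].
rewrite pscaleA => /(pscale_eq_div (lt0r_neq0 l1_gt0)) par.
have z1_01 : 0 <= z1 <= 1 by rewrite z1_ge0 (le_trans (ltW lt_z12) z2_le1).
have z2_01 : 0 <= z2 <= 1 by rewrite (le_trans z1_ge0 (ltW lt_z12)) z2_le1.
by move: lt_z12; rewrite (dir_of_parallel z1_01 z2_01 par) ltxx.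
Qed.

Section FirstDifference.
Variable m : nat.
Hypotheses (lt_mk : (m.+2 <= k)%N)
  (same : forall i, (1 <= i <= m.+1)%N -> side_of (p i) = side_of (q i))
  (differ : side_of (p m.+2) != side_of (q m.+2)).

Let same_src i : (i <= m.+1)%N -> unfold_src p i = unfold_src q i.
Proof.
move=> le_im; apply: unfold_src_eq => l /andP [l1 l2].
by apply: same; rewrite l1 (leq_trans l2).
Qed.

Let in_range i : (1 <= i <= m.+1)%N -> (1 <= i <= k)%N.
Proof. by move=> /andP [i_ge1 le_im]; rewrite i_ge1 (leq_trans le_im) // ltnW. Qed.

Let p_side_change i : (1 <= i <= m.+1)%N -> side_of (p i) != side_of (p i.+1).
Proof.
move=> /andP [i_ge1 le_im].
by apply: (traj_side_change trp i_ge1); rewrite (leq_ltn_trans le_im).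
Qed.

(* [ps] runs from the point [ps i.+1] of the cone spanned by the two rays, back through
   the unfolded copies of the sides, up to the vertex [ps m.+2] where the diagonals split. *)
Definition apex_path (i : nat) (ps : nat -> pt R) : Prop :=
  ps m.+2 = vert (side_of (p m.+1)) /\
  (forall l, (i < l)%N -> (l < m.+2)%N -> on_side (side_of (p l)) (ps l) /\
     exists kap, 0 < kap < 1 /\ ps l = comb2 kap (unfold_src p l) (ps l.+1)) /\
  exists al be, 0 < al /\ 0 < be /\
    ps i.+1 = comb3 (1 - al - be) al be (unfold_src p i) (p i.+1) (q i.+1).

Lemma apex_path_top : exists ps, apex_path m.+1 ps.
Proof.
have m1 : (1 <= m.+1 <= m.+1)%N by rewrite leqnn.
have [r1 [r1_gt1 p_next]] := traj_unfold trp (in_range m1).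
have [r2 [r2_gt1 q_next]] := traj_unfold trq (in_range m1).
rewrite -same_src ?leqnn // in q_next.
have p_on := traj_on_side trp (in_range m1).
have q_on := traj_on_side trq (in_range m1); rewrite -same // in q_on.
have m2k : (1 <= m.+2 <= k)%N by rewrite lt_mk.
have n2 : side_of (p m.+1) != side_of (q m.+2).
  by have := traj_side_change trq (i := m.+1) isT lt_mk; rewrite -same.
have [al [be [al_gt0 [be_gt0 apex]]]] := cone_apex (p_side_change m1) n2 differ r1_gt1 r2_gt1
  p_next q_next p_on q_on (traj_on_side trp m2k) (traj_on_side trq m2k).
exists (fun _ => vert (side_of (p m.+1))); split => //; split; last by exists al, be.
by move=> l lt_ml lt_lm; exfalso; move: lt_ml; rewrite ltnNge -ltnS lt_lm.
Qed.

Lemma apex_path_step i ps : (i < m.+1)%N -> apex_path i.+1 ps -> exists ps', apex_path i ps'.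
Proof.
move=> lt_im [ps_top [ps_path [al [be [al_gt0 [be_gt0 ps_cone]]]]]].
have i1 : (1 <= i.+1 <= m.+1)%N by [].
have [r1 [r1_gt1 p_next]] := traj_unfold trp (in_range i1).
have [r2 [r2_gt1 q_next]] := traj_unfold trq (in_range i1).
rewrite -same_src // in q_next.
set si := side_of (p i.+1).
have p_on : on_side si (p i.+1) := traj_on_side trp (in_range i1).
have q_on : on_side si (q i.+1) by rewrite /si (same i1); apply: (traj_on_side trq); apply: in_range.
have src_behind : bary si (unfold_src p i.+1) < 0.
  have i2k : (1 <= i.+2 <= k)%N by rewrite (leq_trans _ lt_mk).
  have [_ p2_gt0] := traj_on_side trp i2k.
  have := p2_gt0 si (p_side_change i1); rewrite p_next bary_comb2 (proj1 p_on) mulr0 addr0.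
  by nra.
have next_gt0 : 0 < bary si (ps i.+2).
  case: (ltngtP i m) => [lt_im'||eq_im].
  - have [[_ gt0] _] := ps_path i.+2 (ltnSn _) ltac:(by rewrite !ltnS).
    exact: gt0 (p_side_change i1).
  - by rewrite ltnS leqNgt in lt_im; move/negP: lt_im.
  - by rewrite eq_im ps_top /si eq_im bary_vert_self.
have [C [kap [t [t01 [C_def [C_on [kap01 C_cone]]]]]]] :=
  cone_step r1_gt1 r2_gt1 al_gt0 be_gt0 p_next q_next p_on q_on next_gt0 src_behind ps_cone.
exists (fun l => if l == i.+1 then C else ps l); split.
  by rewrite ifN_eq // eqSS neq_ltn lt_im orbT.
split.
- move=> l lt_il lt_lm; case: (l =P i.+1) => [->|/eqP neq_li].
    by split => //; exists kap; rewrite ifN_eq // eqSS neq_ltn ltnSn orbT.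
  have lt_i1l : (i.+1 < l)%N by rewrite ltn_neqAle eq_sym neq_li.
  have [l_on [kk [kk01 kk_cone]]] := ps_path l lt_i1l lt_lm.
  by split => //; exists kk; rewrite ifN_eq // eqSS neq_ltn (ltnW lt_i1l) orbT.
- exists (1 - t), t; case/andP: t01 => t_gt0 t_lt1; split; first lra; split => //.
  by rewrite eqxx C_def (comb2_as_comb3 _ (unfold_src p i)).
Qed.

Lemma apex_path0 : exists ps, apex_path 0 ps.
Proof.
apply: (nat_down_ind (P := fun i => exists ps, apex_path i ps) (n := m.+1)) => //.
  exact: apex_path_top.
by move=> i lt_im [ps ps_path]; exact: apex_path_step lt_im ps_path.
Qed.

Definition apex_traj (ps : nat -> pt R) (l : nat) : pt R := if l == 0%N then a else ps l.

Section ApexPath.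
Variable ps : nat -> pt R.
Hypothesis ps_path : apex_path 0 ps.

Let ps_on l : (0 < l)%N -> (l < m.+2)%N -> on_side (side_of (p l)) (ps l).
Proof. by case: ps_path => _ [path _] l_gt0 lt_lm; case: (path l l_gt0 lt_lm). Qed.

Lemma apex_traj_seg l : (l <= m.+1)%N -> open_seg_inside a b c (apex_traj ps l) (apex_traj ps l.+1).
Proof.
rewrite /apex_traj; case: l => [|l] le_lm /=.
  have := ps_on (l := 1%N) isT isT; rewrite (traj_first_side trp) => ps1_on.
  by rewrite (_ : a = vert VA) //; apply: seg_vert_side.
case: (ltngtP l m) => [lt_lm|lt_ml|->].
- have := ps_on (l := l.+1) isT ltac:(by rewrite ltnS ltnW).
  have := ps_on (l := l.+2) isT ltac:(by rewrite !ltnS).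
  by move=> on2 on1; apply: (seg_side_side _ on1 on2); apply: p_side_change; rewrite /= ltnW.
- by rewrite ltnS leqNgt lt_ml in le_lm.
- by case: ps_path => -> _; apply: seg_side_vert; exact: ps_on.
Qed.

Lemma apex_traj_bounce l : (1 <= l <= m.+1)%N ->
  exists e, on_side_dir a b c (apex_traj ps l) e /\ exists mu, 0 < mu /\
    psub (apex_traj ps l.+1) (apex_traj ps l) =
    pscale mu (reflect_dir e (psub (apex_traj ps l) (apex_traj ps l.-1))).
Proof.
move=> /andP [l_gt0 le_lm]; have lt_lm : (l < m.+2)%N by [].
case: ps_path => _ [path _]; have [l_on [kap [kap01 ps_cone]]] := path l l_gt0 lt_lm.
have ps_l : apex_traj ps l = ps l by rewrite /apex_traj (negbTE (lt0n_neq0 l_gt0)).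
rewrite ps_l /apex_traj /=.
exists (side_dir (side_of (p l))); split; first by apply/on_side_dirP; exists (side_of (p l)).
have mirror_l := unfold_src_mirror l_gt0 (proj1 l_on).
have [f [f_gt0 ray]] : exists f, 0 < f /\
    psub (ps l) (apex_traj ps l.-1) = pscale f (psub (ps l) (unfold_src p l.-1)).
  case: l l_gt0 le_lm lt_lm l_on ps_cone ps_l mirror_l => [|[|l]] // _ le_lm lt_lm _ _ _ _.
  - by exists 1; rewrite pscale1.
  - have [_ [kap' [/andP [_ kap'_lt1] ps_cone']]] := path l.+1 isT ltac:(by rewrite ltnW).
    exists (1 - kap'); split; first lra.
    by rewrite /apex_traj /= ps_cone' psub_comb2_r.
exact: reflection_law_transfer (side_dir_neq0 _) kap01 f_gt0 ps_cone ray mirror_l.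
Qed.

End ApexPath.

Lemma gen_diag_between_of_first_difference : exists w, z1 < w < z2 /\ gen_diag a b c w m.+1.
Proof.
have [ps ps_path] := apex_path0.
have [ps_top [_ [al [be [al_gt0 [be_gt0 ps_cone]]]]]] := ps_path.
case: (trp) => p0 [_ [_ [[l1 [l1_gt0 leg1]] _]]].
case: (trq) => q0 [_ [_ [[l2 [l2_gt0 leg2]] _]]].
have leg : psub (ps 1%N) a =
    padd (pscale (al * l1) (dir_of a b c z1)) (pscale (be * l2) (dir_of a b c z2)).
  by rewrite ps_cone /= psub_comb3 leg1 leg2 !pscaleA.
have [w [L [/andP [lt_z1w lt_wz2] [L_gt0 dirw]]]] :=
  dir_of_cone z1_ge0 lt_z12 z2_le1 (mulr_gt0 al_gt0 l1_gt0) (mulr_gt0 be_gt0 l2_gt0).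
exists w; rewrite lt_z1w lt_wz2; split => //; split.
  by rewrite (ltW (le_lt_trans z1_ge0 lt_z1w)) (ltW (lt_le_trans lt_wz2 z2_le1)).
exists (apex_traj ps); split => //; split.
  by apply/vertexP; exists (side_of (p m.+1)); rewrite /apex_traj /= ps_top.
split; first exact: apex_traj_seg.
split; first by exists L; rewrite /apex_traj /= leg.
exact: apex_traj_bounce.
Qed.

End FirstDifference.

End TwoDiagonals.

Lemma gen_diag_between z1 z2 k : z1 < z2 -> gen_diag a b c z1 k -> gen_diag a b c z2 k ->
  exists w j, z1 < w < z2 /\ (j < k)%N /\ gen_diag a b c w j.
Proof.
move=> lt_z12 [/andP [z1_ge0 _] [p trp]] [/andP [_ z2_le1] [q trq]].
case: (pselect (exists i, (1 <= i <= k)%N && (side_of (p i) != side_of (q i)))) => [some_diff|];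
  last first.
  move=> no_diff; exfalso; apply: (same_sides_impossible trp trq z1_ge0 lt_z12 z2_le1) => i ik.
  by apply/eqP; apply: contra_notT no_diff => differ; exists i; rewrite ik differ.
case: (ex_minnP some_diff) => j /andP [/andP [j_ge1 le_jk] differ] j_min.
have same_first : side_of (p 1%N) = side_of (q 1%N).
  by rewrite (traj_first_side trp) (traj_first_side trq).
case: j j_ge1 le_jk differ j_min => [|[|m]] // _ lt_mk differ j_min.
  by rewrite same_first eqxx in differ.
have same i : (1 <= i <= m.+1)%N -> side_of (p i) = side_of (q i).
  move=> /andP [i_ge1 le_im]; case: (side_of (p i) =P side_of (q i)) => // /eqP differ_i.
  have := j_min i; rewrite i_ge1 differ_i (leq_trans le_im) ?andbT; last by rewrite ltnW // ltnW.
  by move=> /(_ isT); rewrite leqNgt ltnS le_im.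
have [w [mid gw]] := gen_diag_between_of_first_difference trp trq z1_ge0 lt_z12 z2_le1 lt_mk same differ.
by exists w, m.+1.
Qed.

End Triangle.

Lemma finite_set_of_card_fset_set_gt0 (T : choiceType) (A : set T) :
  (0 < #|` fset_set A|)%N -> finite_set A.
Proof.
case: (pselect (finite_set A)) => // infA.
by rewrite /fset_set; case: pselect.
Qed.

Lemma mem_enum_fset_set (T : choiceType) (A : set T) x : finite_set A ->
  (x \in enum_fset (fset_set A)) <-> A x.
Proof. by move=> finA; rewrite -[_ \in _]/(x \in fset_set A) in_fset_set // in_setE. Qed.

Lemma count_bound_contradiction (R : realType) (c P new : nat) :
  expR (c%:R : R) < P%:R -> ((3 + 2 * c) * P <= new)%N ->
  ~ (new%:R <= c%:R * (2 * P.+1%:R + 1 / (expR c%:R / P%:R)) :> R).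
Proof.
move=> exp_lt le_new few; move: le_new; rewrite -(ler_nat R) natrM natrD natrM => le_new.
have E_gt0 := expR_gt0 (c%:R : R); have E_ge := expR_ge1Dx (c%:R : R).
move: few exp_lt le_new E_gt0 E_ge; rewrite -natr1.
set E := expR _; set cR := c%:R; set p := P%:R => few exp_lt le_new E_gt0 E_ge.
have p_gt0 : 0 < p by lra.
have c_ge0 : 0 <= cR by rewrite ler0n.
rewrite (_ : 1 / (E / p) = p / E) in few; last by field; rewrite !gt_eqF.
have cp_lt : cR * (p / E) < p by rewrite mulrA ltr_pdivrMr //; nra.
by nra.
Qed.

Section CutIndex.
Variables (R : realType) (a b c : pt R).

Lemma cut_set_mono m1 m2 x : (m1 <= m2)%N -> cut_set a b c m1 x -> cut_set a b c m2 x.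
Proof. by move=> le_m [k [le_k gk]]; exists k; split => //; apply: leq_trans le_k le_m. Qed.

Variable N : nat.

Definition cut_index (x : R) : nat := find (fun k => `[< gen_diag a b c x k >]) (iota 0 N.+1).

Lemma cut_indexP x : cut_set a b c N x ->
  [/\ gen_diag a b c x (cut_index x), (cut_index x <= N)%N &
      forall k, gen_diag a b c x k -> (cut_index x <= k)%N].
Proof.
case=> k [le_kN gk].
have has_k : has (fun k => `[< gen_diag a b c x k >]) (iota 0 N.+1).
  by apply/hasP; exists k; [rewrite mem_iota | apply/asboolP].
have lt_idx : (cut_index x < N.+1)%N by move: has_k; rewrite has_find size_iota.
split; last 1 first.
- move=> k' gk'; rewrite leqNgt; apply/negP => lt_k'.
  have := before_find 0%N lt_k'; rewrite nth_iota ?add0n; last exact: ltn_trans lt_idx.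
  by move=> /negP; apply; apply/asboolP.
- by have := nth_find 0%N has_k; rewrite nth_iota // add0n => /asboolP.
- by rewrite -ltnS.
Qed.

Lemma cut_set_index r x : (r <= N)%N -> cut_set a b c N x ->
  cut_set a b c r x <-> (cut_index x <= r)%N.
Proof.
move=> le_rN xN; have [gx _ idx_min] := cut_indexP xN; split.
- by case=> k [le_kr gk]; apply: leq_trans (idx_min _ gk) le_kr.
- by move=> le_idx; exists (cut_index x).
Qed.

Hypothesis nd : tri_nondegenerate a b c.
Hypothesis finN : finite_set (cut_set a b c N).
Let X := enum_fset (fset_set (cut_set a b c N)).

Lemma cut_index_separation x y : x \in X -> y \in X -> x < y -> cut_index x = cut_index y ->
  exists w, w \in X /\ x < w < y /\ (cut_index w < cut_index x)%N.
Proof.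
move=> /(mem_enum_fset_set _ finN) xN /(mem_enum_fset_set _ finN) yN lt_xy eq_idx.
have [gx le_xN _] := cut_indexP xN; have [gy _ _] := cut_indexP yN.
rewrite -eq_idx in gy.
have [w [j [mid [lt_j gw]]]] := gen_diag_between nd lt_xy gx gy.
have wN : cut_set a b c N w by exists j; split => //; apply: leq_trans (ltnW lt_j) le_xN.
exists w; split; first exact/(mem_enum_fset_set _ finN).
by split => //; have [_ _ idx_min] := cut_indexP wN; exact: leq_ltn_trans (idx_min _ gw) lt_j.
Qed.

Lemma count_cut_index_le n : (n <= N)%N -> finite_set (cut_set a b c n) ->
  count (fun x => (cut_index x <= n)%N) X = Pcount a b c n.
Proof.
move=> le_nN finn; rewrite -size_filter /Pcount; apply: perm_size; apply: uniq_perm;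
  [exact: filter_uniq (fset_uniq _) | exact: fset_uniq |].
move=> x; rewrite mem_filter; apply/idP/idP.
- move=> /andP [le_idx /(mem_enum_fset_set _ finN) xN]; apply/mem_enum_fset_set => //.
  exact/(cut_set_index le_nN xN).
- move=> /(mem_enum_fset_set _ finn) xn; have xN := cut_set_mono le_nN xn.
  rewrite (proj2 (mem_enum_fset_set _ finN) xN) andbT.
  exact/(cut_set_index le_nN xN).
Qed.

End CutIndex.

Section Lemma2p2.
Variables (R : realType) (a b c : pt R) (n c0 : nat).
Hypothesis finM : finite_set (cut_set a b c (n + c0)).
Let X := enum_fset (fset_set (cut_set a b c (n + c0))).
Let idx := cut_index a b c (n + c0).

Lemma good_position_of_close_triple (del : R) : close_good_triple X idx n c0 del ->
  exists (x y z : R) (p q r : nat),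
    good_position a b c x y z p q r /\
    (n.+1 <= p)%N /\ (n.+1 <= q)%N /\ (n.+1 <= r)%N /\
    (p <= n + c0)%N /\ (q <= n + c0)%N /\ (r <= n + c0)%N /\
    `|x - y| <= del /\ `|x - z| <= del /\ `|y - z| <= del.
Proof.
move=> [x [y [z [xX [yX [zX [new_x [lt_xy [lt_yz [le_z [mid [only_z dists]]]]]]]]]]]].
have xM := proj1 (mem_enum_fset_set _ finM) xX; have [gx _ _] := cut_indexP xM.
have yM := proj1 (mem_enum_fset_set _ finM) yX; have [gy _ _] := cut_indexP yM.
have zM := proj1 (mem_enum_fset_set _ finM) zX; have [gz _ _] := cut_indexP zM.
exists x, y, z, (idx x), (idx y), (idx z); split.
  do 5 (split; first by rewrite ?lt_xy ?lt_yz).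
  move=> w w_mid wz; have wM := cut_set_mono le_z wz.
  apply: only_z w_mid; first exact/(mem_enum_fset_set _ finM).
  exact/(cut_set_index le_z wM).
have new_y := ltn_trans new_x lt_xy; have new_z := ltn_trans new_y lt_yz.
do 3 (split => //); split; first exact: leq_trans (ltnW (ltn_trans lt_xy lt_yz)) le_z.
by split; [exact: leq_trans (ltnW lt_yz) le_z | split].
Qed.

Lemma few_new_cut_points_impossible : finite_set (cut_set a b c n) ->
  expR (c0%:R : R) < (Pcount a b c n)%:R ->
  ((4 + 2 * c0) * Pcount a b c n <= Pcount a b c (n + c0))%N ->
  ~ ((count (fun x => (n < idx x)%N) X)%:R <= c0%:R *
      (2 * (count (fun x => (idx x <= n)%N) X).+1%:R +
       1 / (expR (c0%:R : R) / (Pcount a b c n)%:R))).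
Proof.
move=> finn exp_lt le_P; rewrite count_cut_index_le ?leq_addr //.
apply: count_bound_contradiction exp_lt _.
have split_count :
    (count (fun x => (n < idx x)%N) X + Pcount a b c n)%N = Pcount a b c (n + c0).
  have -> : Pcount a b c (n + c0) = size X by [].
  rewrite -(count_cut_index_le finM (leq_addr c0 n) finn) addnC.
  rewrite -(count_predC (fun x => (idx x <= n)%N)).
  by congr addn; apply: eq_count => x /=; rewrite ltnNge.
by move: le_P; rewrite -split_count; lia.
Qed.

End Lemma2p2.

Theorem lemma2p2 (R : realType) (a b c : pt R) (n c0 : nat) :
  tri_nondegenerate a b c ->
  (4 <= c0)%N ->
  expR (c0%:R : R) < (Pcount a b c n)%:R ->
  ((4 + 2 * c0) * Pcount a b c n <= Pcount a b c (n + c0))%N ->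
  exists (x y z : R) (p q r : nat),
    good_position a b c x y z p q r /\
    (n.+1 <= p)%N /\ (n.+1 <= q)%N /\ (n.+1 <= r)%N /\
    (p <= n + c0)%N /\ (q <= n + c0)%N /\ (r <= n + c0)%N /\
    `|x - y| <= expR (c0%:R) / (Pcount a b c n)%:R /\
    `|x - z| <= expR (c0%:R) / (Pcount a b c n)%:R /\
    `|y - z| <= expR (c0%:R) / (Pcount a b c n)%:R.
Proof.
move=> nd _ exp_lt le_P.
have P_gt0 : (0 < Pcount a b c n)%N by rewrite -(ltr0n R) (lt_trans (expR_gt0 _) exp_lt).
have finn := finite_set_of_card_fset_set_gt0 P_gt0.
have PM_gt0 : (0 < Pcount a b c (n + c0))%N by apply: leq_trans le_P; rewrite muln_gt0 P_gt0.
have finM := finite_set_of_card_fset_set_gt0 PM_gt0.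
have del_gt0 : 0 < expR (c0%:R : R) / (Pcount a b c n)%:R by rewrite divr_gt0 ?expR_gt0 ?ltr0n.
have X01 x : x \in enum_fset (fset_set (cut_set a b c (n + c0))) -> 0 <= x <= 1.
  by move=> /(mem_enum_fset_set _ finM) /cut_indexP [[]].
have idx_le x : x \in enum_fset (fset_set (cut_set a b c (n + c0))) ->
    (cut_index a b c (n + c0) x <= n + c0)%N.
  by move=> /(mem_enum_fset_set _ finM) /cut_indexP [].
case: (close_good_triple_or_few_new (fset_uniq _) X01 idx_le del_gt0 (cut_index_separation nd finM)).
  exact: good_position_of_close_triple.
by move=> few; exfalso; apply: (few_new_cut_points_impossible finM finn exp_lt le_P).
Qed.
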